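(* If two ordered forests $\mathcal F,\mathcal F'$ have the same underlying unlabelled rooted forest, then the commutative images $\phi(R_{\mathcal F})$ and $\phi(R_{\mathcal F'})$ (with $\phi:a_{ij}\mapsto x_{ij}$ applied to the realization) are equal. Writing $R^{\overline{\mathcal F}}$ for this common image, where $\overline{\mathcal F}$ is the underlying rooted forest, the elements $R^{\overline{\mathcal F}}$, $\overline{\mathcal F}$ ranging over all rooted forests, form a basis of the (realized) Connes–Kreimer Hopf algebra.
   Context: An ordered forest on $n$ vertices is a rooted forest with vertex set $[n]$ (labels unrelated to the structure); its edge set $E(\mathcal F)$ consists of the pairs $(l,p(l))$, $p$ the parent map. $\mathcal G\le\mathcal F$ iff $E(\mathcal F)\subseteq E(\mathcal G)$ (both on $[n]$). First realization: $A=\{a_{ij}:0\le i<j\}$ with $a_{ij}\prec a_{kl}$ iff $j=k$; $S^{\mathcal F}$ is the sum of words $w_1\cdots w_n$ over $A$ with $w_k\prec w_l$ whenever $k$ is the parent of $l$. $R_{\mathcal F}=\sum_{\mathcal G\le\mathcal F}(-1)^{|E(\mathcal F)|-|E(\mathcal G)|}S^{\mathcal G}$. $\phi$ sends $a_{ij}$ to commuting indeterminates $x_{ij}$; $\phi(S^{\mathcal F})$ depends only on the underlying rooted forest, and the span of the $\phi(S^{\mathcal F})$ is a realization of the Connes–Kreimer Hopf algebra, in which $\phi(S^{\mathcal F})$ for distinct underlying rooted forests are linearly independent. *)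

From HB Require Import structures.
From mathcomp Require Import all_boot all_order all_algebra.
Set Implicit Arguments. Unset Strict Implicit. Unset Printing Implicit Defensive.
Import GRing.Theory.

(* Letters a_ij of the alphabet A, encoded as pairs (i,j); a genuine letter has i < j. *)
Definition letter := (nat * nat)%type.
Definition is_letter (a : letter) : bool := a.1 < a.2.
Definition prec (a b : letter) : bool := a.2 == b.1.

(* A parent map on the vertex set [n] (encoded as 'I_n); None = root. *)
Definition pmap_n (n : nat) := {ffun 'I_n -> option 'I_n}.

Definition is_forest n (p : pmap_n n) : bool :=
  [forall x : 'I_n, iter n (fun o => obind (fun y => p y) o) (Some x) == None].

Definition nedges n (p : pmap_n n) : nat := #|[pred l : 'I_n | p l != None]|.

Definition forest_le n (G F : pmap_n n) : bool :=
  [forall l : 'I_n, forall k : 'I_n, (F l == Some k) ==> (G l == Some k)].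

(* Coefficient of the commutative monomial given by the multiset m (a sequence of
   letters, read up to permutation) in phi(S^F): the number of words w_1...w_n over A
   whose multiset of letters is m and with w_k ≺ w_l whenever k is the parent of l.
   Words are indexed by the vertices of the forest. *)
Definition S_coef n (p : pmap_n n) (m : seq letter) : nat :=
  if (size m == n) && all is_letter m then
    count (fun w : seq letter =>
             [forall l : 'I_n, forall k : 'I_n,
                 (p l == Some k) ==> prec (nth (0,0) w k) (nth (0,0) w l)])
          (permutations m)
  else 0.

(* Coefficient of monomial m in phi(R_F). *)
Definition R_coef n (F : pmap_n n) (m : seq letter) : int :=
  (\sum_(G : pmap_n n | is_forest G && forest_le G F)
     ((-1) ^+ (nedges G - nedges F) * (S_coef G m)%:Z))%R.

Definition OF := {n : nat & pmap_n n}.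
Definition OF_forest (x : OF) : bool := is_forest (projT2 x).

(* Same underlying unlabelled rooted forest: an isomorphism of rooted forests. *)
Definition forest_iso (x y : OF) : Prop :=
  exists g : 'I_(projT1 x) -> 'I_(projT1 y),
    bijective g /\ forall l, projT2 y (g l) = omap g (projT2 x l).

(* Series over K in the commuting variables x_ij, given by coefficient functions on
   monomials (multisets of letters encoded as sequences). *)
Definition series (K : fieldType) := seq letter -> K.
Definition phiS (K : fieldType) (x : OF) : series K :=
  fun m => ((S_coef (projT2 x) m)%:R)%R.
Definition phiR (K : fieldType) (x : OF) : series K :=
  fun m => ((R_coef (projT2 x) m)%:~R)%R.

Definition in_span (K : fieldType) (gen : OF -> series K) (f : series K) : Prop :=
  exists (k : nat) (t : 'I_k -> OF) (c : 'I_k -> K),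
    (forall i, OF_forest (t i)) /\
    forall m, (f m = \sum_(i < k) c i * gen (t i) m)%R.

(* phi(R_F) is an alternating sum over the forests G <= F obtained by deleting edges
   of F, and every interval of this order is a Boolean lattice, so its alternating sums
   vanish except on singletons (toggle one edge).  Moebius inversion then gives
   phi(S_F) = sum_(G <= F) phi(R_G), whence both spanning statements, and invariance
   under isomorphism is a reindexing of words and subforests.
   Expanding S_G over the words w with letters in a monomial m, the contribution of w
   to R_F is an alternating sum over the interval between F and the forest C_w read
   off from w (when the letters determine it), so it is [F = C_w].  For the monomial
   whose letters are (code of parent, code of vertex) of F, with injective codes
   increasing along edges, every C_w is isomorphic to F and C_F = F: the coefficient of
   this monomial in R_G counts the words w with C_w = G, so it is nonzero exactly when
   G is isomorphic to F, which gives linear independence. *)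

From HB Require Import structures.
From mathcomp Require Import all_boot all_order all_algebra fingroup perm zify.
Set Implicit Arguments. Unset Strict Implicit. Unset Printing Implicit Defensive.
Import GRing.Theory Num.Theory.
Local Open Scope ring_scope.

Section ForestOrder.
Variable n : nat.
Implicit Types (A B G H F : pmap_n n).

Lemma forest_leP G F :
  reflect (forall l k, F l = Some k -> G l = Some k) (forest_le G F).
Proof.
apply: (iffP forallP) => [le l k /eqP Flk | le l].
  by apply/eqP; move/forallP: (le l) => /(_ k) /implyP; apply.
by apply/forallP => k; apply/implyP => /eqP /le ->.
Qed.

Lemma forest_le_refl F : forest_le F F.
Proof. exact/forest_leP. Qed.

Lemma forest_le_trans A B H : forest_le A B -> forest_le B H -> forest_le A H.
Proof. by move=> /forest_leP AB /forest_leP BH; apply/forest_leP => l k /BH /AB. Qed.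

Lemma forest_le_anti A B : forest_le A B -> forest_le B A -> A = B.
Proof.
move=> /forest_leP AB /forest_leP BA; apply/ffunP => l.
case Bl: (B l) => [k|]; first exact: AB.
by case Al: (A l) => [k|] //; rewrite (BA _ _ Al) in Bl.
Qed.

Lemma forest_le_antiE A H : forest_le H A && forest_le A H = (H == A).
Proof.
apply/idP/eqP => [/andP[HA AH] | ->]; first exact: forest_le_anti.
by rewrite forest_le_refl.
Qed.

Lemma leq_nedges A B : forest_le A B -> (nedges B <= nedges A)%N.
Proof.
move=> /forest_leP AB; apply: subset_leq_card; apply/subsetP => l; rewrite !inE.
by case Bl: (B l) => [k|] //; rewrite (AB _ _ Bl).
Qed.

Definition parent_step F (o : option 'I_n) : option 'I_n := obind (fun y => F y) o.

Lemma is_forestP F :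
  reflect (forall x, iter n (parent_step F) (Some x) = None) (is_forest F).
Proof. by apply: (iffP forallP) => h x; apply/eqP/h. Qed.

(* Ranking the values of [f] gives a potential bounded by [n], so no chain of
   parents can be [n] steps long. *)
Lemma forest_of_potential F (f : 'I_n -> nat) :
  (forall l k, F l = Some k -> (f k < f l)%N) -> is_forest F.
Proof.
move=> f_dec; pose r v := #|[pred u | (f u < f v)%N]|.
have r_lt v : (r v < n)%N.
  rewrite -[n in (_ < n)%N]card_ord; apply: proper_card; apply/properP.
  by split; [apply/subsetP | exists v; rewrite ?inE ?ltnn].
have r_dec l k : F l = Some k -> (r k < r l)%N.
  move=> /f_dec fkl; apply: proper_card; apply/properP; split.
    by apply/subsetP => u; rewrite !inE => /ltn_trans; apply.
  by exists k; rewrite !inE ?ltnn.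
have descent j x y : iter j (parent_step F) (Some x) = Some y -> (r y + j <= r x)%N.
  elim: j y => [|j IH] y /=; first by case=> ->; rewrite addn0.
  case e: (iter j _ _) => [z|] //= /r_dec ryz.
  by have := IH z e; lia.
apply/is_forestP => x; case e: (iter n _ _) => [y|] //.
by have := descent _ _ _ e; have := r_lt x; lia.
Qed.

End ForestOrder.

Section Depth.
Variables (n : nat) (F : pmap_n n).
Hypothesis forestF : is_forest F.

Definition depth (v : 'I_n) : nat :=
  count (fun j => iter j.+1 (parent_step F) (Some v) != None) (iota 0 n).

Lemma depth_parent l k : F l = Some k -> depth l = (depth k).+1.
Proof.
move=> Flk; pose a j := iter j (parent_step F) (Some k) != None.
have -> : depth l = count a (iota 0 n).
  by apply: eq_count => j; rewrite /a iterSr /= Flk.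
have -> : depth k = count a (iota 1 n).
  by rewrite -[1%N]addn0 iotaDl count_map; apply: eq_count.
have an : a n = false by rewrite /a (is_forestP _ forestF).
have := congr1 (count a) (iotaD 0 n 1).
by rewrite addn1 /= count_cat /= add0n an !addn0 add1n => <-.
Qed.

End Depth.

Lemma forest_le_forest n (G F : pmap_n n) :
  is_forest G -> forest_le G F -> is_forest F.
Proof.
move=> forestG /forest_leP GF; apply: (forest_of_potential (f := depth G)).
by move=> l k /GF /(depth_parent forestG) ->.
Qed.

Section EdgeToggle.
Variables (n : nat) (A B : pmap_n n) (l0 k0 : 'I_n).
Hypotheses (Al0 : A l0 = None) (Bl0 : B l0 = Some k0).

Definition toggle_edge (H : pmap_n n) : pmap_n n :=
  [ffun l => if l == l0 then
               if H l0 == None then Some k0 else if H l0 == Some k0 then None else H l0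
             else H l].

Lemma toggle_edgeK : involutive toggle_edge.
Proof.
move=> H; apply/ffunP => l; rewrite !ffunE; case: eqP => [->|//].
rewrite eqxx; case: (H l0) => [u|] /=; last by rewrite eqxx.
case: (eqVneq u k0) => [->|uk0]; rewrite ?eqxx //=.
have Su : (Some u == Some k0) = false by rewrite (inj_eq (@Some_inj _)) (negbTE uk0).
by rewrite Su /= Su.
Qed.

Let in_interval H := forest_le H A && forest_le B H.

Lemma interval_toggle_cases H : in_interval H -> H l0 = None \/ H l0 = Some k0.
Proof.
case/andP=> _ /forest_leP BH; case Hl0: (H l0) => [u|]; [right | by left].
by have := BH _ _ Hl0; rewrite Bl0 => -[->].
Qed.

Lemma interval_toggle_edge H : in_interval (toggle_edge H) = in_interval H.
Proof.
suff toggle_in H' : in_interval H' -> in_interval (toggle_edge H').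
  by apply/idP/idP => /toggle_in //; rewrite toggle_edgeK.
move=> H'_in; have H'l0 := interval_toggle_cases H'_in.
case/andP: H'_in => /forest_leP H'A /forest_leP BH'.
apply/andP; split; apply/forest_leP => l k.
  move=> Alk; have l_l0 : l != l0 by apply/eqP => ll0; rewrite ll0 Al0 in Alk.
  by rewrite ffunE (negbTE l_l0); apply: H'A.
rewrite ffunE; case: eqP => [-> | _]; last exact: BH'.
by case: H'l0 => ->; rewrite /= ?eqxx // Bl0 => -[<-].
Qed.

Lemma odd_nedges_toggle_edge H :
  in_interval H -> odd (nedges (toggle_edge H)) = ~~ odd (nedges H).
Proof.
move=> /interval_toggle_cases Hl0; rewrite /nedges (cardD1 l0) [in RHS](cardD1 l0).
have -> : #|[predD1 [pred l | toggle_edge H l != None] & l0]| =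
          #|[predD1 [pred l | H l != None] & l0]|.
  by apply: eq_card => l; rewrite !inE ffunE; case: eqP.
by rewrite !inE ffunE eqxx; case: Hl0 => ->; rewrite /= ?eqxx /= ?negbK.
Qed.

(* The toggle is a sign-reversing involution of the interval. *)
Lemma sum_sign_interval_toggle :
  \sum_(H | forest_le H A && forest_le B H) (-1) ^+ nedges H = 0 :> int.
Proof.
set S := \sum_(H | _) _; have SN : S = - S.
  rewrite {1}/S (reindex_inj (inv_inj toggle_edgeK)) /= -sumrN.
  apply: eq_big => H; first exact: interval_toggle_edge.
  move=> Ht_in; have /odd_nedges_toggle_edge odd_t : in_interval H.
    by rewrite -interval_toggle_edge.
  by rewrite -signr_odd odd_t signrN signr_odd.
by apply/eqP; have := mulrn_eq0 S 2; rewrite mulr2n {1}SN addNr eqxx => /esym.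
Qed.

End EdgeToggle.

Lemma signr_subn (a b : nat) : (a <= b)%N -> (-1) ^+ (b - a) = (-1) ^+ b * (-1) ^+ a :> int.
Proof. by move=> ab; rewrite -{2}(subnK ab) exprD -mulrA -expr2 sqrr_sign mulr1. Qed.

Section BooleanInterval.
Variables (n : nat) (A B : pmap_n n).
Hypothesis BA : forest_le B A.

Lemma sum_sign_interval_neq (c : int) :
  A != B -> \sum_(H | forest_le H A && forest_le B H) (-1) ^+ nedges H * c = 0.
Proof.
move=> AB; rewrite -big_distrl /=.
have [l0 Al0 Bl0] : exists2 l0, A l0 = None & B l0 != None.
  case: (pickP (fun l => A l != B l)) => [l0 /eqP ABl0 | AB_eq]; last first.
    by case/eqP: AB; apply/ffunP => l; apply/eqP/negbFE/AB_eq.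
  case Al0: (A l0) ABl0 => [k|]; first by rewrite (forest_leP _ _ BA _ _ Al0).
  by exists l0 => //; apply/eqP => Bl0; rewrite Bl0 in ABl0.
case Bl0k : (B l0) Bl0 => [k0|] // _.
by rewrite (sum_sign_interval_toggle Al0 Bl0k) mul0r.
Qed.

Lemma sum_sign_interval :
  \sum_(H | forest_le H A && forest_le B H) (-1) ^+ (nedges H - nedges A) = (A == B)%:R :> int.
Proof.
have [<-|AB] := eqVneq A B.
  by rewrite (eq_bigl _ _ (forest_le_antiE A)) big_pred1_eq subnn.
rewrite (eq_bigr (fun H => (-1) ^+ nedges H * (-1) ^+ nedges A)).
  by rewrite sum_sign_interval_neq.
by move=> H /andP[HA _]; rewrite signr_subn ?leq_nedges.
Qed.

Lemma sum_sign_interval_bottom :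
  \sum_(H | forest_le H A && forest_le B H) (-1) ^+ (nedges B - nedges H) = (A == B)%:R :> int.
Proof.
have [<-|AB] := eqVneq A B.
  by rewrite (eq_bigl _ _ (forest_le_antiE A)) big_pred1_eq subnn.
rewrite (eq_bigr (fun H => (-1) ^+ nedges H * (-1) ^+ nedges B)).
  by rewrite sum_sign_interval_neq.
by move=> H /andP[_ BH]; rewrite signr_subn ?leq_nedges // mulrC.
Qed.

End BooleanInterval.

Section Words.
Variable n : nat.
Implicit Types (F G H : pmap_n n) (m w : seq letter).

Definition compatible H w : bool :=
  [forall l : 'I_n, forall k : 'I_n,
     (H l == Some k) ==> prec (nth (0,0) w k) (nth (0,0) w l)].

Lemma compatibleP H w :
  reflect (forall l k, H l = Some k -> prec (nth (0,0) w k) (nth (0,0) w l))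
          (compatible H w).
Proof.
apply: (iffP forallP) => [comp l k /eqP Hlk | comp l].
  by move/forallP: (comp l) => /(_ k) /implyP; apply.
by apply/forallP => k; apply/implyP => /eqP /comp.
Qed.

Definition is_monomial m : bool := (size m == n) && all is_letter m.

Lemma S_coefE G m :
  S_coef G m = if is_monomial m then count (compatible G) (permutations m) else 0%N.
Proof. by []. Qed.

Lemma is_monomial_perm m w : is_monomial m -> w \in permutations m -> is_monomial w.
Proof.
by rewrite mem_permutations /is_monomial => + mw; rewrite (perm_size mw) (perm_all _ mw).
Qed.

(* The second coordinates of the letters strictly decrease from child to parent. *)
Lemma compatible_forest H w : is_monomial w -> compatible H w -> is_forest H.
Proof.
case/andP=> /eqP size_w /allP w_letters /compatibleP comp.
apply: (forest_of_potential (f := fun l => (nth (0,0) w l).2)) => l k /comp /eqP ->.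
by apply: w_letters; rewrite mem_nth ?size_w.
Qed.

Definition R_word F w : int :=
  \sum_(H | forest_le H F && compatible H w) (-1) ^+ (nedges H - nedges F).

Lemma R_coef_words F m :
  R_coef F m = if is_monomial m then \sum_(w <- permutations m) R_word F w else 0.
Proof.
rewrite /R_coef; case: ifP => m_mono; last first.
  by apply: big1 => G _; rewrite S_coefE m_mono mulr0.
under eq_bigr => G _ do
  rewrite S_coefE m_mono -sum1_count -natz natr_sum mulr_sumr big_mkcond.
rewrite exchange_big /=; apply: eq_big_seq => w /(is_monomial_perm m_mono) w_mono.
rewrite /R_word big_mkcond [RHS]big_mkcond /=; apply: eq_bigr => G _.
case: (boolP (compatible G w)) => [Gw | _]; last by rewrite andbF; case: ifP; rewrite ?mulr0.
by rewrite (compatible_forest w_mono Gw) andbT mulr1.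
Qed.

End Words.

Lemma in_span_sum (K : fieldType) n (P : pred (pmap_n n)) (gen : OF -> series K)
    (f : series K) (c : pmap_n n -> K) :
  (forall G, P G -> is_forest G) ->
  (forall m, f m = \sum_(G | P G) c G * gen (existT _ n G) m) -> in_span gen f.
Proof.
move=> P_forest f_sum.
exists #|P|, (fun i => existT _ n (enum_val i)), (fun i => c (enum_val i)).
split=> [i | m]; first exact/P_forest/enum_valP.
by rewrite f_sum (big_enum_val (A := P) (fun G => c G * gen (existT _ n G) m)).
Qed.

Lemma phiR_in_span_phiS (K : fieldType) (x : OF) :
  OF_forest x -> in_span (@phiS K) (phiR K x).
Proof.
case: x => n F _; apply: (in_span_sum (P := fun G => is_forest G && forest_le G F)
  (c := fun G => ((-1) ^+ (nedges G - nedges F))%:~R)) => [G /andP[] // | m].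
rewrite /phiR /R_coef /= rmorph_sum; apply: eq_bigr => G _.
by rewrite rmorphM /phiS /= -pmulrn.
Qed.

(* Moebius inversion over the Boolean intervals of forests. *)
Lemma S_coef_sum_R_coef n (F : pmap_n n) m : is_forest F ->
  (S_coef F m)%:Z = \sum_(G | is_forest G && forest_le G F) R_coef G m.
Proof.
move=> forestF; rewrite /R_coef (exchange_big_dep (fun H => is_forest H && forest_le H F)) /=;
  last by move=> G H /andP[_ GF] /andP[-> HG]; apply: forest_le_trans HG GF.
rewrite (eq_bigr (fun H => (F == H)%:R * (S_coef H m)%:Z)) => [|H /andP[forestH HF]].
  rewrite (bigD1 F) /=; last by rewrite forestF forest_le_refl.
  by rewrite eqxx mul1r big1 ?addr0 // => H /andP[_ HF]; rewrite eq_sym (negbTE HF) mul0r.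
rewrite -big_distrl /= -(sum_sign_interval_bottom HF); congr (_ * _).
apply: eq_bigl => G; apply/idP/idP => [/and3P[/andP[_ ->] _ ->] // | /andP[GF HG]].
by rewrite (forest_le_forest forestH HG) GF forestH HG.
Qed.

Lemma phiS_in_span_phiR (K : fieldType) (x : OF) :
  OF_forest x -> in_span (@phiR K) (phiS K x).
Proof.
case: x => n F /= forestF.
apply: (in_span_sum (P := fun G => is_forest G && forest_le G F) (c := fun=> 1)).
  by move=> G /andP[].
move=> m; rewrite /phiS /phiR /= pmulrn S_coef_sum_R_coef // rmorph_sum.
by apply: eq_bigr => G _; rewrite mul1r.
Qed.

Section Relabel.
Variable n : nat.
Implicit Types (s : {perm 'I_n}) (A B H : pmap_n n) (w : seq letter).

Definition relabel s H : pmap_n n := [ffun j => omap s (H (s^-1%g j))].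

Definition relabel_word s w : seq letter := [seq nth (0,0) w (s^-1%g j) | j <- enum 'I_n].

Lemma relabelK s : cancel (relabel s) (relabel s^-1%g).
Proof.
move=> H; apply/ffunP => l; rewrite !ffunE invgK permK.
by case: (H l) => //= u; rewrite permK.
Qed.

Lemma nth_relabel_word s w (j : 'I_n) : nth (0,0) (relabel_word s w) j = nth (0,0) w (s^-1%g j).
Proof. by rewrite (nth_map j) ?size_enum_ord // nth_ord_enum. Qed.

Lemma relabel_wordK s w : size w = n -> relabel_word s^-1%g (relabel_word s w) = w.
Proof.
move=> size_w; apply: (@eq_from_nth _ (0,0)) => [|i]; first by rewrite size_map size_enum_ord.
rewrite size_map size_enum_ord => lt_i_n.
by rewrite -[i]/(val (Ordinal lt_i_n)) !nth_relabel_word invgK permK.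
Qed.

Lemma perm_relabel_word s w : size w = n -> perm_eq (relabel_word s w) w.
Proof.
move=> size_w; rewrite -{2}(mkseq_nth (0,0) w) /mkseq size_w -val_enum_ord -map_comp.
have -> : relabel_word s w = map (nth (0,0) w \o val) (map s^-1%g (enum 'I_n)).
  by rewrite -map_comp.
apply: perm_map; apply: uniq_perm; rewrite ?(map_inj_uniq perm_inj) ?enum_uniq //.
by move=> j; rewrite mem_enum; apply/mapP; exists (s j); rewrite ?mem_enum ?permK.
Qed.

Lemma perm_relabel_permutations s m : size m = n ->
  perm_eq (map (relabel_word s) (permutations m)) (permutations m).
Proof.
move=> size_m; have size_perm w : w \in permutations m -> size w = n.
  by rewrite mem_permutations => /perm_size ->.
have perm_in w : w \in permutations m -> forall s', relabel_word s' w \in permutations m.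
  move=> wm s'; rewrite mem_permutations (perm_trans (perm_relabel_word _ _)) ?size_perm //.
  by rewrite -mem_permutations.
apply: uniq_perm; rewrite ?permutations_uniq //.
  rewrite (map_inj_in_uniq (f := relabel_word s)) ?permutations_uniq // => w1 w2 w1m w2m eq12.
  by rewrite -(relabel_wordK s (size_perm _ w1m)) eq12 relabel_wordK ?size_perm.
move=> w; apply/mapP/idP => [[v vm ->] | wm]; first exact: perm_in.
exists (relabel_word s^-1%g w); first exact: perm_in.
by rewrite -{1}[s]invgK relabel_wordK ?size_perm.
Qed.

Lemma forest_le_relabel s A B : forest_le (relabel s A) (relabel s B) = forest_le A B.
Proof.
apply/forest_leP/forest_leP => le l k.
  move=> Blk; have := le (s l) (s k); rewrite !ffunE permK Blk /= => /(_ erefl).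
  by case: (A l) => //= u [/perm_inj ->].
rewrite !ffunE; case Bl: (B (s^-1%g l)) => [u|] //= [<-].
by rewrite (le _ _ Bl).
Qed.

Lemma compatible_relabel s H w : compatible (relabel s H) (relabel_word s w) = compatible H w.
Proof.
apply/compatibleP/compatibleP => comp l k.
  by move=> Hlk; have := comp (s l) (s k); rewrite !ffunE permK Hlk !nth_relabel_word !permK; apply.
rewrite ffunE; case Hl: (H (s^-1%g l)) => [u|] //= [<-].
by rewrite !nth_relabel_word permK; apply: comp.
Qed.

Lemma nedges_relabel s H : nedges (relabel s H) = nedges H.
Proof.
rewrite /nedges -!sum1_card (reindex_inj (@perm_inj _ s)) /=.
by apply: eq_bigl => l; rewrite !inE ffunE permK; case: (H l).
Qed.

Lemma R_word_relabel s F w : R_word (relabel s F) (relabel_word s w) = R_word F w.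
Proof.
rewrite /R_word (reindex_inj (can_inj (relabelK s))) /=.
apply: eq_big => H; first by rewrite forest_le_relabel compatible_relabel.
by rewrite !nedges_relabel.
Qed.

Lemma R_coef_relabel s F m : R_coef (relabel s F) m = R_coef F m.
Proof.
rewrite !R_coef_words; case: ifP => // /andP[/eqP size_m _].
rewrite -(perm_big _ (perm_relabel_permutations s size_m)) big_map.
by apply: eq_bigr => w _; rewrite R_word_relabel.
Qed.

End Relabel.

Lemma R_coef_iso (x y : OF) :
  forest_iso x y -> forall m, R_coef (projT2 x) m = R_coef (projT2 y) m.
Proof.
case: x y => n F [n' F'] /= [g [g_bij g_iso]] m.
have en : n = n' by have := bij_eq_card g_bij; rewrite !card_ord.
subst n'; pose s := perm (bij_inj g_bij).
suff -> : F' = relabel s F by rewrite R_coef_relabel.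
apply/ffunP => j; rewrite ffunE -{1}(permKV s j) permE g_iso /=.
by case: (F _) => //= u; rewrite permE.
Qed.

Section ForestMonomial.
Variables (n : nat) (F : pmap_n n).
Hypothesis forestF : is_forest F.

(* Codes are positive, so that [0] can serve as the parent code of a root. *)
Definition vertex_code (v : 'I_n) : nat := (depth F v * n + v).+1.

Lemma vertex_code_inj : injective vertex_code.
Proof.
move=> u v [] /(congr1 (modn^~ n)); rewrite !modnMDl !modn_small //.
exact: val_inj.
Qed.

Lemma vertex_code_parent l k : F l = Some k -> (vertex_code k < vertex_code l)%N.
Proof. by move=> /(depth_parent forestF) Fl; rewrite /vertex_code Fl; have := ltn_ord k; nia. Qed.

Definition vertex_letter (v : 'I_n) : letter :=
  (if F v is Some k then vertex_code k else 0%N, vertex_code v).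

Definition forest_monomial : seq letter := map vertex_letter (enum 'I_n).

Lemma is_monomial_forest : is_monomial n forest_monomial.
Proof.
rewrite /is_monomial size_map size_enum_ord eqxx; apply/allP => _ /mapP[v _ ->].
by rewrite /is_letter /=; case Fv: (F v) => [k|] //; apply: vertex_code_parent.
Qed.

Section Word.
Variable w : seq letter.
Hypothesis w_perm : w \in permutations forest_monomial.

Lemma size_word : size w = n.
Proof. by case/andP: (is_monomial_perm is_monomial_forest w_perm) => /eqP. Qed.

Lemma word_code_inj (k k' : 'I_n) : (nth (0,0) w k).2 = (nth (0,0) w k').2 -> k = k'.
Proof.
have perm_codes : perm_eq (map snd w) (map snd forest_monomial).
  by apply: perm_map; rewrite -mem_permutations.
have uniq_codes : uniq (map snd w).
  rewrite (perm_uniq perm_codes) -map_comp map_inj_uniq ?enum_uniq //.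
  by move=> u v /vertex_code_inj.
have lt_size (i : 'I_n) : (i < size w)%N by rewrite size_word.
move=> eq_codes; apply/val_inj/eqP.
rewrite -(nth_uniq 0%N _ _ uniq_codes) ?size_map ?lt_size //.
by rewrite !(nth_map (0,0)) ?lt_size // eq_codes.
Qed.

Definition word_forest : pmap_n n :=
  [ffun l : 'I_n => [pick k : 'I_n | (nth (0,0) w k).2 == (nth (0,0) w l).1]].

Lemma compatible_word_forest H : compatible H w = forest_le word_forest H.
Proof.
apply/compatibleP/forest_leP => comp l k Hlk; last first.
  by have := comp _ _ Hlk; rewrite ffunE; case: pickP => // k' /eqP code_k' [<-]; apply/eqP.
rewrite ffunE; case: pickP => [k' /eqP code_k' | none].
  by congr Some; apply: word_code_inj; rewrite code_k'; apply/esym/eqP/comp.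
by have := none k; rewrite -[_ == _]/(prec _ _) comp.
Qed.

Lemma R_word_forest_monomial H : R_word H w = (H == word_forest)%:R.
Proof.
rewrite /R_word; under eq_bigl => G do rewrite compatible_word_forest.
have [le_H | nle_H] := boolP (forest_le word_forest H); first exact: sum_sign_interval.
rewrite big_pred0 => [|G]; last first.
  by apply/negP => /andP[GH wG]; case/negP: nle_H; apply: forest_le_trans GH.
by case: eqP => // eqH; rewrite eqH forest_le_refl in nle_H.
Qed.

Definition word_vertex (l : 'I_n) : 'I_n :=
  odflt l [pick v | vertex_letter v == nth (0,0) w l].

Lemma vertex_letter_word_vertex l : vertex_letter (word_vertex l) = nth (0,0) w l.
Proof.
rewrite /word_vertex; case: pickP => [v /eqP // | none].
have : nth (0,0) w l \in forest_monomial.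
  by rewrite -(perm_mem (_ : perm_eq w _)) ?mem_nth ?size_word // -mem_permutations.
by case/mapP => v _ wl; have := none v; rewrite wl eqxx.
Qed.

Lemma word_vertex_inj : injective word_vertex.
Proof.
by move=> u v eq_uv; apply: word_code_inj; rewrite -!vertex_letter_word_vertex eq_uv.
Qed.

Lemma word_vertex_iso l : F (word_vertex l) = omap word_vertex (word_forest l).
Proof.
have [inv wvK Kwv] := injF_bij word_vertex_inj.
rewrite ffunE; case: pickP => [k /eqP | none] /=.
  rewrite -(vertex_letter_word_vertex k) -(vertex_letter_word_vertex l) /=.
  by case: (F (word_vertex l)) => [u|] //= /vertex_code_inj ->.
case Fl: (F (word_vertex l)) => [u|] //.
by have := none (inv u); rewrite -!vertex_letter_word_vertex /= Fl Kwv eqxx.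
Qed.

End Word.

Lemma R_coef_forest_monomial H :
  R_coef H forest_monomial =
    (count (fun w => H == word_forest w) (permutations forest_monomial))%:Z.
Proof.
rewrite R_coef_words is_monomial_forest -sum1_count -natz natr_sum [RHS]big_mkcond /=.
by apply: eq_big_seq => w w_perm; rewrite R_word_forest_monomial //; case: eqP.
Qed.

Lemma R_coef_forest_monomial_self : R_coef F forest_monomial != 0.
Proof.
have mono_perm : forest_monomial \in permutations forest_monomial by rewrite mem_permutations.
rewrite R_coef_forest_monomial eqz_nat -lt0n -has_count; apply/hasP.
exists forest_monomial => //; apply/eqP/ffunP => l.
have wv_id v : word_vertex forest_monomial v = v.
  apply: vertex_code_inj; have := vertex_letter_word_vertex mono_perm v.
  by rewrite (nth_map v) ?size_enum_ord // nth_ord_enum => /(congr1 snd).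
have := word_vertex_iso mono_perm l; rewrite wv_id => ->.
by case: (word_forest _ l) => //= u; rewrite wv_id.
Qed.

End ForestMonomial.

Lemma forest_iso_R_coef_forest_monomial (y : OF) n (F : pmap_n n) : is_forest F ->
  R_coef (projT2 y) (forest_monomial F) != 0 -> forest_iso y (existT _ n F).
Proof.
case: y => n' H forestF /= RH.
have en : n' = n.
  move: RH; rewrite R_coef_words; case: ifP => [/andP[/eqP size_m _] _ | _]; last by rewrite eqxx.
  by rewrite -size_m size_map size_enum_ord.
subst n'; move: RH; rewrite R_coef_forest_monomial // eqz_nat -lt0n -has_count.
case/hasP => w w_perm /eqP ->; exists (word_vertex F w).
by split; [apply/injF_bij/(word_vertex_inj forestF) | apply: word_vertex_iso].
Qed.

Lemma pchar0_intr_eq0 (R : idomainType) : [pchar R] =i pred0 ->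
  forall z : int, (z%:~R == 0 :> R) = (z == 0).
Proof.
move=> R0 [m|m]; first by rewrite -pmulrn ((pcharf0P _).1 R0).
by rewrite NegzE rmorphN /= !oppr_eq0 -pmulrn ((pcharf0P _).1 R0).
Qed.

(* Testing against the monomial of [F] isolates the coefficient of [F]. *)
Lemma phiR_free (K : fieldType) (HK : [pchar K] =i pred0) (k : nat) (t : 'I_k -> OF)
    (c : 'I_k -> K) :
  (forall i, OF_forest (t i)) -> (forall i j, forest_iso (t i) (t j) -> i = j) ->
  (forall m, \sum_(i < k) c i * phiR K (t i) m = 0) -> forall i, c i = 0.
Proof.
move=> t_forest t_noniso c_sum i0; case ti0: (t i0) => [n F].
have forestF : is_forest F by have := t_forest i0; rewrite ti0.
have := c_sum (forest_monomial F); rewrite (bigD1 i0) //= big1 ?addr0 => [|i i_i0].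
  rewrite ti0 /phiR /= => /eqP; rewrite mulf_eq0 => /orP[/eqP // |].
  by rewrite pchar0_intr_eq0 // (negbTE (R_coef_forest_monomial_self forestF)).
have [Ri0 | /forest_iso_R_coef_forest_monomial iso] :=
  eqVneq (R_coef (projT2 (t i)) (forest_monomial F)) 0; first by rewrite /phiR Ri0 mulr0.
by have := t_noniso i i0; rewrite ti0 => /(_ (iso forestF)) eq_i; rewrite eq_i eqxx in i_i0.
Qed.

Unset Implicit Arguments.

Theorem mainTheorem10 (K : fieldType) (HK : [pchar K] =i pred0) :
  (* well-definedness: phi(R_F) depends only on the underlying rooted forest *)
  (forall x y : OF, OF_forest x -> OF_forest y -> forest_iso x y ->
     forall m, R_coef (projT2 x) m = R_coef (projT2 y) m)
  /\
  (* each R^F lies in the realized Connes-Kreimer algebra span{phi(S^F)} *)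
  (forall x : OF, OF_forest x -> in_span (@phiS K) (phiR K x))
  /\
  (* the R^F span it *)
  (forall x : OF, OF_forest x -> in_span (@phiR K) (phiS K x))
  /\
  (* linear independence of R^F over pairwise non-isomorphic forests *)
  (forall (k : nat) (t : 'I_k -> OF) (c : 'I_k -> K),
     (forall i, OF_forest (t i)) ->
     (forall i j, forest_iso (t i) (t j) -> i = j) ->
     (forall m, \sum_(i < k) c i * phiR K (t i) m = 0) ->
     forall i, c i = 0).
Proof.
split; first by move=> x y _ _; exact: R_coef_iso.
split; first exact: phiR_in_span_phiS.
split; first exact: phiS_in_span_phiR.
exact: phiR_free HK.
Qed.
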